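(* Let $G=(V,E)$ be a reaction network in $\mathbb{R}^n$ with deficiency zero that is not weakly reversible. Then for every choice of rate constants $\mathbf{k}\in\mathbb{R}^{|E|}_{>0}$ and every initial condition $\mathbf{x}_0\in\mathbb{R}^n_{>0}$ whose stoichiometric compatibility class $\mathcal{S}_{\mathbf{x}_0}$ is bounded, the solution $\mathbf{x}(t)$ of the mass-action system $(G,\mathbf{k})$ with $\mathbf{x}(0)=\mathbf{x}_0$ satisfies $\liminf_{t\to\infty}x_i(t)=0$ for some $1\le i\le n$; i.e., $(G,\mathbf{k})$ exhibits weak extinction in some species $X_i$.
   Context: A reaction network $G=(V,E)$ is a finite directed graph with vertex set $V\subset\mathbb{Z}^n_{\ge0}$, no self-loops, no isolated vertices, at most one edge per ordered pair; an edge $\mathbf{y}\to\mathbf{y}'$ is a reaction. Species $X_1,\dots,X_n$ correspond to the coordinates $x_1,\dots,x_n$. Linkage classes are the connected components of the underlying undirected graph; $G$ is weakly reversible if every reaction lies on a directed cycle. The stoichiometric subspace is $\mathcal{S}_G=\operatorname{span}\{\mathbf{y}'-\mathbf{y}:\mathbf{y}\to\mathbf{y}'\in E\}$ and the deficiency is $|V|-\ell-\dim\mathcal{S}_G$ with $\ell$ the number of linkage classes. The mass-action system $(G,\mathbf{k})$ with $\mathbf{k}\in\mathbb{R}^{|E|}_{>0}$ is $\dot{\mathbf{x}}=\sum_{\mathbf{y}\to\mathbf{y}'\in E}k_{\mathbf{y}\to\mathbf{y}'}\mathbf{x}^{\mathbf{y}}(\mathbf{y}'-\mathbf{y})$ on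 $\mathbb{R}^n_{>0}$, with $\mathbf{x}^{\mathbf{y}}=\prod_i x_i^{y_i}$; $\mathbb{R}^n_{>0}$ is forward invariant and solutions stay in the stoichiometric compatibility class $\mathcal{S}_{\mathbf{x}_0}=(\mathbf{x}_0+\mathcal{S}_G)\cap\mathbb{R}^n_{>0}$. The system exhibits weak extinction in $X_i$ if for some $\mathbf{x}_0\in\mathbb{R}^n_{>0}$ the solution satisfies $\liminf_{t\to\infty}x_i(t)=0$. *)

From HB Require Import structures.
From mathcomp Require Import all_boot all_order all_algebra.
From mathcomp Require Import all_classical all_reals all_analysis.
Set Implicit Arguments. Unset Strict Implicit. Unset Printing Implicit Defensive.
Import Order.TTheory GRing.Theory Num.Theory.
Import numFieldNormedType.Exports.

Local Open Scope ring_scope.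

Definition cplx (n : nat) := 'rV[nat]_n.
(* A reaction network is given by
   its list of reactions E; its vertex set V is the set of complexes occurring
   in some reaction (so there are no isolated vertices). *)
Definition reaction (n : nat) := (cplx n * cplx n)%type.

Definition is_network (n : nat) (E : seq (reaction n)) : bool :=
  uniq E && all (fun e => e.1 != e.2) E.

Definition vertices (n : nat) (E : seq (reaction n)) : seq (cplx n) :=
  undup (flatten [seq [:: e.1; e.2] | e <- E]).

Definition uadj (n : nat) (E : seq (reaction n)) : rel (seq_sub (vertices E)) :=
  fun a b => ((val a, val b) \in E) || ((val b, val a) \in E).

Definition nlinkage (n : nat) (E : seq (reaction n)) : nat :=
  #|[set [set b | connect (@uadj n E) a b] | a : seq_sub (vertices E)]|.

Local Open Scope classical_set_scope.

Definition reaches (n : nat) (E : seq (reaction n)) (y z : cplx n) : Prop :=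
  exists p : seq (cplx n), path (fun a b => (a, b) \in E) y p /\ last y p = z.

Definition weakly_reversible (n : nat) (E : seq (reaction n)) : Prop :=
  forall e, e \in E -> reaches E e.2 e.1.

Definition reaction0 (n : nat) : reaction n := (0, 0).

(* reaction vectors y' - y as rows; the row space is the stoichiometric subspace *)
Definition stoich (R : realType) (n : nat) (E : seq (reaction n)) : 'M[R]_(size E, n) :=
  \matrix_(j < size E, i < n)
    (((nth (reaction0 n) E j).2 0 i)%:R - ((nth (reaction0 n) E j).1 0 i)%:R).

Definition deficiency (R : realType) (n : nat) (E : seq (reaction n)) : int :=
  (size (vertices E))%:Z - (nlinkage E)%:Z - (\rank (stoich R E))%:Z.

Definition monom (R : realType) (n : nat) (y : cplx n) (x : 'rV[R]_n) : R :=
  \prod_(i < n) x 0 i ^+ y 0 i.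

Definition mass_action (R : realType) (n : nat) (E : seq (reaction n))
  (k : 'I_(size E) -> R) (x : 'rV[R]_n) : 'rV[R]_n :=
  \sum_(j < size E) (k j * monom (nth (reaction0 n) E j).1 x) *: row j (stoich R E).

Definition positive_vec (R : realType) (n : nat) (x : 'rV[R]_n) : Prop :=
  forall i : 'I_n, 0 < x 0 i.

Definition compat_class (R : realType) (n : nat) (E : seq (reaction n))
  (x0 : 'rV[R]_n) : set 'rV[R]_n :=
  fun x => positive_vec x /\ (x - x0 <= stoich R E)%MS.

Definition bounded_class (R : realType) (n : nat) (S : set 'rV[R]_n) : Prop :=
  exists M : R, forall x, S x -> forall i : 'I_n, `|x 0 i| <= M.

Definition is_solution (R : realType) (n : nat) (E : seq (reaction n))
  (k : 'I_(size E) -> R) (x0 : 'rV[R]_n) (x : R -> 'rV[R]_n) : Prop :=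
  [/\ x 0 = x0,
      (forall t : R, 0 <= t -> positive_vec (x t)),
      (forall i : 'I_n, (fun s => x s 0 i) @ 0^'+ --> x0 0 i) &
      (forall t : R, 0 < t -> forall i : 'I_n,
          is_derive t (1 : R) (fun s : R => x s 0 i) (mass_action k (x t) 0 i))].

Definition liminf_zero (R : realType) (f : R -> R) : Prop :=
  limf_einf (fun t => (f t)%:E) (pinfty_nbhs R) = 0%E.

From HB Require Import structures.
From mathcomp Require Import all_boot all_order all_algebra.
From mathcomp Require Import all_classical all_reals all_analysis.
From mathcomp Require Import zify ring lra.
Import Order.TTheory GRing.Theory Num.Theory.
Import numFieldNormedType.Exports.
Set Implicit Arguments. Unset Strict Implicit. Unset Printing Implicit Defensive.
Local Open Scope ring_scope.

(* Since the network is not weakly reversible, some reaction e = y -> y' lies on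
   no directed cycle. Let phi be the indicator of the complexes reachable from y';
   along every reaction phi can only increase, and along e it jumps from 0 to 1.
   Deficiency zero says that the stoichiometric matrix has the same rank as the
   incidence matrix of the graph, so there is a w with phi(z') - phi(z) = <z' - z, w>
   for every reaction z -> z'. Hence <w, x(t)> is nondecreasing, with rate at least
   k_e x(t)^y. If no concentration had liminf zero, this rate would eventually be
   bounded below by a positive constant and <w, x(t)> would be unbounded, although
   the trajectory stays in the bounded compatibility class. *)

Definition rsource (n : nat) (E : seq (reaction n)) (j : 'I_(size E)) : cplx n :=
  (nth (reaction0 n) E j).1.

Definition rtarget (n : nat) (E : seq (reaction n)) (j : 'I_(size E)) : cplx n :=
  (nth (reaction0 n) E j).2.

Lemma sum_seq_sub_indicator (R : pzSemiRingType) (T : choiceType) (V : seq T)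
    (z : T) (zV : z \in V) (F : 'I_#|{: seq_sub V}| -> R) :
  \sum_v ((ssval (enum_val v) == z)%:R * F v) = F (enum_rank (SeqSub zV)).
Proof.
rewrite (bigD1 (enum_rank (SeqSub zV))) //= enum_rankK eqxx mul1r.
rewrite big1 ?addr0 // => v /eqP vz; case: eqP => [vzE|_]; last by rewrite mul0r.
by case: vz; rewrite -(enum_valK v); congr enum_rank; exact: val_inj.
Qed.

Section Incidence.

Variables (F : fieldType) (n : nat) (E : seq (reaction n)).

Let vtx := seq_sub (vertices E).
Let m := #|{: vtx}|.

Lemma mem_vertices_source (j : 'I_(size E)) : rsource j \in vertices E.
Proof.
rewrite mem_undup; apply/flatten_mapP.
by exists (nth (reaction0 n) E j); [exact: mem_nth|rewrite inE eqxx].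
Qed.

Lemma mem_vertices_target (j : 'I_(size E)) : rtarget j \in vertices E.
Proof.
rewrite mem_undup; apply/flatten_mapP.
by exists (nth (reaction0 n) E j); [exact: mem_nth|rewrite !inE eqxx orbT].
Qed.

Let source_vtx (j : 'I_(size E)) : vtx := SeqSub (mem_vertices_source j).
Let target_vtx (j : 'I_(size E)) : vtx := SeqSub (mem_vertices_target j).

Lemma connect_uadj_sym : connect_sym (@uadj n E).
Proof. by apply: sym_connect_sym => a b; rewrite /uadj orbC. Qed.

Lemma uadj_reaction (j : 'I_(size E)) : @uadj n E (source_vtx j) (target_vtx j).
Proof. by rewrite /uadj /= /rsource /rtarget -surjective_pairing mem_nth. Qed.

Definition incidence_mx : 'M[F]_(size E, m) :=
  \matrix_(j, v)
    ((ssval (enum_val v) == rtarget j)%:R - (ssval (enum_val v) == rsource j)%:R).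

Lemma incidence_mxE (j : 'I_(size E)) (u : 'I_m -> F) :
  \sum_v incidence_mx j v * u v =
  u (enum_rank (target_vtx j)) - u (enum_rank (source_vtx j)).
Proof.
under eq_bigr do rewrite !mxE mulrBl.
rewrite sumrB (sum_seq_sub_indicator (mem_vertices_target j)).
by rewrite (sum_seq_sub_indicator (mem_vertices_source j)).
Qed.

Definition linkage_classes : {set {set vtx}} :=
  [set [set b | connect (@uadj n E) a b] | a : vtx].

Definition linkage_mx : 'M[F]_(#|linkage_classes|, m) :=
  \matrix_(q, v) (enum_val (v : 'I_#|{: vtx}|) \in (enum_val q : {set vtx}))%:R.

Lemma linkage_mx_incidence : linkage_mx *m incidence_mx^T = 0.
Proof.
apply/matrixP => q j; rewrite [LHS]mxE [RHS]mxE.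
under eq_bigr do rewrite [X in _ * X]mxE mulrC.
rewrite incidence_mxE !mxE !enum_rankK.
have /imsetP[a _ ->] := enum_valP q; rewrite !inE.
have cs := connect_uadj_sym.
by rewrite !(cs a) (same_connect1 cs (uadj_reaction j)) subrr.
Qed.

Lemma linkage_mx_rank : (nlinkage E <= \rank linkage_mx)%N.
Proof.
have rep (q : 'I_#|linkage_classes|) : {v : vtx | v \in (enum_val q : {set vtx})}.
  apply: sigW; have /imsetP[a _ ->] := enum_valP q.
  by exists a; rewrite inE connect0.
(* Linkage classes are nonempty and pairwise disjoint, so choosing one vertex in
   each class gives a right inverse of linkage_mx. *)
pose sel : 'M[F]_(m, #|linkage_classes|) :=
  \matrix_(v, q) (v == enum_rank (sval (rep q)))%:R.
suff sel_inv : linkage_mx *m sel = 1%:M.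
  by apply: leq_trans (mxrankM_maxl _ sel); rewrite sel_inv mxrank1.
apply/matrixP => q q'; rewrite !mxE (bigD1 (enum_rank (sval (rep q')))) //=.
rewrite big1 => [|v /negbTE vq]; last by rewrite !mxE vq mulr0.
rewrite !mxE eqxx mulr1 addr0 enum_rankK.
case: (rep q') => z /= zq'; have [->|qq'] := eqVneq q q'; first by rewrite zq' ?eqxx.
case: (boolP (z \in _)) => // zq; case/eqP: qq'; apply: enum_val_inj.
have cs := connect_uadj_sym; move: zq zq'.
have /imsetP[a _ ->] := enum_valP q; have /imsetP[a' _ ->] := enum_valP q'.
rewrite !inE => za za'; apply/setP => b; rewrite !inE.
by rewrite (same_connect cs za) (same_connect cs za').
Qed.

Lemma rank_incidence_mx :
  (\rank incidence_mx + nlinkage E <= size (vertices E))%N.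
Proof.
have ker_rank : (nlinkage E <= m - \rank incidence_mx)%N.
  apply: leq_trans linkage_mx_rank _; rewrite -(mxrank_tr incidence_mx) -mxrank_ker.
  exact/mxrankS/sub_kermxP/linkage_mx_incidence.
have size_vtx : m = size (vertices E) by rewrite /m card_seq_sub ?undup_uniq.
have := rank_leq_col incidence_mx; lia.
Qed.

End Incidence.

Section DeficiencyZero.

Variables (R : realType) (n : nat) (E : seq (reaction n)).

Let m := #|{: seq_sub (vertices E)}|.

Definition complex_mx : 'M[R]_(m, n) :=
  \matrix_(v, i) ((ssval (enum_val (v : 'I_m)) : cplx n) 0 i)%:R.

Lemma stoich_incidence : stoich R E = incidence_mx R E *m complex_mx.
Proof.
apply/matrixP => j i; rewrite [RHS]mxE.
under eq_bigr do rewrite [X in _ * X]mxE.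
by rewrite incidence_mxE !enum_rankK !mxE.
Qed.

Lemma deficiency0_rank_incidence :
  deficiency R E = 0 -> \rank (incidence_mx R E) = \rank (stoich R E).
Proof.
rewrite /deficiency => /eqP def0.
have := rank_incidence_mx R E.
have : (\rank (stoich R E) <= \rank (incidence_mx R E))%N.
  by rewrite stoich_incidence mxrankM_maxl.
lia.
Qed.

Lemma deficiency0_coboundary (phi : cplx n -> R) :
  deficiency R E = 0 ->
  exists w : 'I_n -> R, forall j : 'I_(size E),
    \sum_i stoich R E j i * w i = phi (rtarget j) - phi (rsource j).
Proof.
move=> def0; set B := incidence_mx R E.
have subS : ((stoich R E)^T <= B^T)%MS by rewrite stoich_incidence trmx_mul submxMl.
have subB : (B^T <= (stoich R E)^T)%MS.
  by rewrite -(mxrank_leqif_sup subS).2 !mxrank_tr deficiency0_rank_incidence.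
pose u : 'cV[R]_m := \col_v phi (ssval (enum_val v)).
have /submxP[D BuD] : ((B *m u)^T <= (stoich R E)^T)%MS.
  by apply: submx_trans subB; rewrite trmx_mul submxMl.
exists (fun i => D 0 i) => j.
have -> : \sum_i stoich R E j i * D 0 i = (B *m u) j 0.
  rewrite -(trmxK (B *m u)) BuD trmx_mul trmxK mxE.
  by apply: eq_bigr => i _; rewrite !mxE.
rewrite mxE; under eq_bigr do rewrite [u _ _]mxE.
by rewrite incidence_mxE !enum_rankK.
Qed.

End DeficiencyZero.

Local Open Scope classical_set_scope.

Lemma MVT_gt0 (R : realType) (f df : R -> R) (a b : R) :
  0 < a -> a < b -> (forall t : R, 0 < t -> is_derive t 1 f (df t)) ->
  exists2 c, a < c & f b - f a = df c * (b - a).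
Proof.
move=> a_gt0 ab f_df.
have f_df_ab (t : R) : t \in `]a, b[%R -> is_derive t 1 f (df t).
  by rewrite in_itv /= => /andP[a_t _]; apply/f_df/(lt_trans a_gt0).
have f_cont : {within `[a, b], continuous f}.
  apply: derivable_within_continuous => t; rewrite in_itv /= => /andP[a_t _].
  by case: (f_df t (lt_le_trans a_gt0 a_t)).
have [c + ->] := MVT ab f_df_ab f_cont.
by rewrite in_itv /= => /andP[ac _]; exists c.
Qed.

Lemma is_derive0_right_lim (R : realType) (f : R -> R) (l : R) :
  (forall t : R, 0 < t -> is_derive t 1 f 0) -> f @ 0^'+ --> l ->
  forall t : R, 0 < t -> f t = l.
Proof.
move=> f_d0 f_l t t_gt0.
have f_near_t : \forall s \near 0^'+, f t = f s.
  near=> s.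
  have s_gt0 : 0 < s by near: s; exact: nbhs_right_gt.
  have s_lt_t : s < t by near: s; exact: nbhs_right_lt.
  have [c _] := MVT_gt0 s_gt0 s_lt_t f_d0.
  by rewrite mul0r => /eqP; rewrite subr_eq0 => /eqP.
have f_ft : f @ 0^'+ --> f t by apply: cvg_trans (near_eq_cvg f_near_t) (cvg_cst _).
exact: (cvg_unique (@Rhausdorff R) f_ft f_l).
Unshelve. all: by end_near.
Qed.

Lemma unbounded_of_derive_lbound (R : realType) (f df : R -> R) (delta : R) :
  (forall t : R, 0 < t -> is_derive t 1 f (df t)) -> 0 < delta ->
  (\forall t \near +oo, delta <= df t) ->
  forall B, exists2 t, 0 < t & B < f t.
Proof.
move=> f_df delta_gt0 [T [_ df_ge]] B.
pose T1 := `|T| + 1; pose t := T1 + (`|B - f T1| + 1) / delta.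
have T1_gt0 : 0 < T1 by rewrite ltr_pwDr.
have T_lt_T1 : T < T1 by rewrite (le_lt_trans (ler_norm T)) // ltrDl.
have T1_lt_t : T1 < t by rewrite ltrDl divr_gt0 // ltr_pwDr.
exists t; first exact: lt_trans T1_gt0 T1_lt_t.
have [c T1c f_incr] := MVT_gt0 T1_gt0 T1_lt_t f_df.
have : delta * (t - T1) <= f t - f T1.
  by rewrite f_incr ler_wpM2r ?subr_ge0 ?(ltW T1_lt_t) // df_ge // (lt_trans T_lt_T1).
rewrite addrC addKr mulrC divfK ?gt_eqF //.
have := ler_norm (B - f T1); lra.
Qed.

Lemma liminf_zeroN_lbound (R : realType) (f : R -> R) :
  (forall t : R, 0 <= t -> 0 < f t) -> ~ liminf_zero f ->
  exists2 c : R, 0 < c & \forall t \near +oo, c <= f t.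
Proof.
move=> f_gt0; rewrite /liminf_zero limf_einfE => liminf_neq0.
set S := [set ereal_inf [set (f t)%:E | t in V] | V in pinfty_nbhs R].
have pos_near : pinfty_nbhs R [set t | 0 < t] by exists 0; split => // t.
have S_ge0 : (0 <= ereal_sup S)%E.
  apply: le_trans (ereal_sup_ubound (ex_intro2 _ _ _ pos_near erefl)).
  by apply: le_ereal_inf_tmp => _ [t /= t_gt0 <-]; rewrite lee_fin; apply/ltW/f_gt0/ltW.
have S_gt0 : (0 < ereal_sup S)%E by rewrite lt_def S_ge0 andbT; apply/eqP.
have [_ [V V_near <-]] := ereal_sup_gt S_gt0.
have inf_le t : V t -> (ereal_inf [set (f t)%:E | t in V] <= (f t)%:E)%E.
  by move=> Vt; apply: ereal_inf_lbound; exists t.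
case: (ereal_inf _) inf_le => [r| |] //= inf_le.
- rewrite lte_fin => r_gt0; exists r => //.
  by apply: filterS V_near => t Vt; rewrite -lee_fin inf_le.
- by move=> _; exists 1 => //; apply: filterS V_near => t /inf_le.
Qed.

Lemma monom_gt0 (R : realType) (n : nat) (y : cplx n) (z : 'rV[R]_n) :
  positive_vec z -> 0 < monom y z.
Proof. by move=> z_gt0; apply: prodr_gt0 => i _; apply: exprn_gt0. Qed.

Lemma ler_monom (R : realType) (n : nat) (y : cplx n) (c z : 'rV[R]_n) :
  (forall i, 0 <= c 0 i <= z 0 i) -> monom y c <= monom y z.
Proof.
move=> cz; apply: ler_prod => i _; have /andP[c_ge0 c_le] := cz i.
by rewrite exprn_ge0 //= lerXn2r // nnegrE (le_trans c_ge0).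
Qed.

Lemma monom_near_lbound (R : realType) (n : nat) (x : R -> 'rV[R]_n) (y : cplx n) :
  (forall i, exists2 c : R, 0 < c & \forall t \near +oo, c <= x t 0 i) ->
  exists2 mu : R, 0 < mu & \forall t \near +oo, mu <= monom y (x t).
Proof.
move=> x_lb; have /choice[c c_lb] : forall i, exists c : R,
    0 < c /\ \forall t \near +oo, c <= x t 0 i.
  by move=> i; have [c ? ?] := x_lb i; exists c.
exists (monom y (\row_i c i)).
  by apply: monom_gt0 => i; rewrite mxE; case: (c_lb i).
have : \forall t \near +oo, forall i, c i <= x t 0 i.
  by apply: filter_forall => i; case: (c_lb i).
apply: filterS => t cx; apply: ler_monom => i.
by rewrite mxE cx andbT; case: (c_lb i) => /ltW.
Qed.

Lemma bounded_class_dot (R : realType) (n : nat) (S : set 'rV[R]_n) (w : 'I_n -> R) :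
  bounded_class S -> exists B, forall z, S z -> \sum_i w i * z 0 i <= B.
Proof.
move=> [M SM]; exists (\sum_i `|w i| * M) => z Sz; apply: ler_sum => i _.
by apply: le_trans (ler_norm _) _; rewrite normrM ler_wpM2l // SM.
Qed.

Section MassAction.

Variables (R : realType) (n : nat) (E : seq (reaction n)) (k : 'I_(size E) -> R).

Lemma dot_mass_action (p : 'I_n -> R) (z : 'rV[R]_n) :
  \sum_i p i * mass_action k z 0 i =
  \sum_j (k j * monom (rsource j) z) * \sum_i stoich R E j i * p i.
Proof.
under eq_bigr do rewrite summxE mulr_sumr.
rewrite exchange_big; apply: eq_bigr => j _; rewrite mulr_sumr.
by apply: eq_bigr => i _; rewrite !mxE; ring.
Qed.

Variables (x0 : 'rV[R]_n) (x : R -> 'rV[R]_n).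
Hypothesis x_sol : is_solution k x0 x.

Lemma is_derive_dot_solution (p : 'I_n -> R) (t : R) : 0 < t ->
  is_derive t 1 (fun s => \sum_i p i * x s 0 i)
    (\sum_j (k j * monom (rsource j) (x t)) * \sum_i stoich R E j i * p i).
Proof.
case: x_sol => _ _ _ x_d t_gt0; rewrite -dot_mass_action.
rewrite (_ : (fun s => _) = \sum_i (fun s => p i * x s 0 i)); last first.
  by apply/funext => s; rewrite fct_sumE.
have x_dt := x_d t t_gt0; exact: is_derive_sum.
Qed.

Lemma dot_solution_conserved (p : 'I_n -> R) :
  (forall j, \sum_i stoich R E j i * p i = 0) ->
  forall t, 0 < t -> \sum_i p i * x t 0 i = \sum_i p i * x0 0 i.
Proof.
case: x_sol => _ _ x_cont _ p_orth; apply: is_derive0_right_lim.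
  move=> t t_gt0; have := is_derive_dot_solution p t_gt0.
  by under eq_bigr do rewrite p_orth mulr0; rewrite big1.
by apply: (cvg_big add_continuous) => i _; exact: cvgMr.
Qed.

Lemma solution_compat_class (t : R) : 0 <= t -> compat_class E x0 (x t).
Proof.
case: x_sol => x_0 x_pos _ _; rewrite le_eqVlt => /predU1P[<-|t_gt0].
  by rewrite x_0; split; rewrite ?subrr ?sub0mx // -x_0; exact: x_pos.
split; first exact/x_pos/ltW.
rewrite submxE mulmxBl subr_eq0; apply/eqP/matrixP => r i.
rewrite (ord1 r) [LHS]mxE [RHS]mxE.
under eq_bigr do rewrite mulrC; under [RHS]eq_bigr do rewrite mulrC.
apply: dot_solution_conserved => // j.
by have /matrixP/(_ j i) := mulmx_coker (stoich R E); rewrite [LHS]mxE [RHS]mxE.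
Qed.

End MassAction.

Lemma flux_term_le (R : realType) (n : nat) (E : seq (reaction n))
    (k c : 'I_(size E) -> R) (z : 'rV[R]_n) (j0 : 'I_(size E)) :
  (forall j, 0 < k j) -> positive_vec z -> (forall j, 0 <= c j) ->
  k j0 * monom (rsource j0) z * c j0 <= \sum_j (k j * monom (rsource j) z) * c j.
Proof.
move=> k_gt0 z_gt0 c_ge0; rewrite (bigD1 j0) //= lerDl sumr_ge0 // => j _.
by rewrite !mulr_ge0 // ltW ?monom_gt0.
Qed.

Lemma reaches_reaction (n : nat) (E : seq (reaction n)) (a y z : cplx n) :
  reaches E a y -> (y, z) \in E -> reaches E a z.
Proof.
move=> [p [p_path <-]] yz; exists (rcons p z).
by rewrite rcons_path p_path last_rcons.
Qed.

Lemma reaches_source_target (R : numDomainType) (n : nat) (E : seq (reaction n))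
    (a : cplx n) (j : 'I_(size E)) :
  (`[< reaches E a (rsource j) >]%:R : R) <= `[< reaches E a (rtarget j) >]%:R.
Proof.
case: (asboolP (reaches E a (rsource j))) => //= a_src.
suff /asboolP -> : reaches E a (rtarget j) by [].
by apply: reaches_reaction a_src _; rewrite /rsource /rtarget -surjective_pairing mem_nth.
Qed.

Lemma reachable_flux_ge (R : realType) (n : nat) (E : seq (reaction n))
    (k : 'I_(size E) -> R) (z : 'rV[R]_n) (j0 : 'I_(size E)) (e : reaction n) :
  (forall j, 0 < k j) -> positive_vec z ->
  nth (reaction0 n) E j0 = e -> ~ reaches E e.2 e.1 ->
  k j0 * monom e.1 z <= \sum_j (k j * monom (rsource j) z) *
    (`[< reaches E e.2 (rtarget j) >]%:R - `[< reaches E e.2 (rsource j) >]%:R).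
Proof.
move=> k_gt0 z_gt0 e_j0 not_back.
apply: le_trans (flux_term_le j0 k_gt0 z_gt0 _); last first.
  by move=> j; rewrite subr_ge0 reaches_source_target.
rewrite /rsource /rtarget e_j0 asboolT ?asboolF ?subr0 ?mulr1 //.
by exists [::].
Qed.

Lemma not_weakly_reversibleP (n : nat) (E : seq (reaction n)) :
  ~ weakly_reversible E -> exists2 e, e \in E & ~ reaches E e.2 e.1.
Proof.
move=> not_wr; apply: contrapT => no_e; apply: not_wr => e eE.
by apply: contrapT => not_back; apply: no_e; exists e.
Qed.

Unset Implicit Arguments.
Theorem theorem1p2 (R : realType) (n : nat) (E : seq (reaction n)) :
  is_network E ->
  deficiency R E = 0 ->
  ~ weakly_reversible E ->
  forall (k : 'I_(size E) -> R), (forall j, 0 < k j) ->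
  forall (x0 : 'rV[R]_n), positive_vec x0 ->
  bounded_class (compat_class E x0) ->
  forall x : R -> 'rV[R]_n, is_solution k x0 x ->
  exists i : 'I_n, liminf_zero (fun t => x t 0 i).
Proof.
move=> _ def0 not_wr k k_gt0 x0 _ bounded x x_sol.
have x_pos t : 0 <= t -> positive_vec (x t) by case: x_sol => _ + _ _; apply.
have [e eE not_back] := not_weakly_reversibleP not_wr.
have [w w_pot] := deficiency0_coboundary
  (fun z => `[< reaches E e.2 z >]%:R : R) def0.
pose j0 := Ordinal (etrans (index_mem e E) eE).
have e_j0 : nth (reaction0 n) E j0 = e by rewrite nth_index.
apply: contrapT => /forallNP no_extinction.
have [mu mu_gt0 mu_le] := monom_near_lbound e.1
  (fun i => liminf_zeroN_lbound (fun t t_ge0 => x_pos t t_ge0 i) (no_extinction i)).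
have [B dot_le] := bounded_class_dot w bounded.
have [|t t_gt0] := unbounded_of_derive_lbound (is_derive_dot_solution x_sol w)
  (mulr_gt0 (k_gt0 j0) mu_gt0) _ B.
  have t_pos : \forall t \near +oo, 0 < t :> R by exists 0; split => // t.
  apply: filterS2 mu_le t_pos => t mu_le_t t_gt0; under eq_bigr do rewrite w_pot.
  apply: le_trans (reachable_flux_ge k_gt0 (x_pos t (ltW t_gt0)) e_j0 not_back).
  by rewrite ler_pM2l.
by move/lt_geF; rewrite dot_le //; exact: solution_compat_class x_sol _ (ltW t_gt0).
Qed.
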